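(* Let $n \in \mathbb{N}$ with $n \geq 7$ and let $\delta_1, \dots, \delta_{2^n} \in [-1,1]$ satisfy $\delta_1 + \delta_2 + \cdots + \delta_{2^n} \leq 1$. Then there exists an interval $I$ in $\mathbb{N}$ such that $I \subset [1, 2^n]$, $|I| \geq n$, and $$\max_{\min I \leq k \leq \max I} \ \sum_{j=k}^{\max I} \delta_j \leq 1.$$
   Context: An interval in $\mathbb{N}$ is a set of the form $[m,n] \cap \mathbb{N}$ with $m,n \in \mathbb{N}$, $m \le n$; $|I|$ denotes its cardinality. *)

From mathcomp Require Import all_boot all_order all_algebra.
Set Implicit Arguments. Unset Strict Implicit. Unset Printing Implicit Defensive.

From mathcomp Require Import all_boot all_order all_algebra.
From mathcomp Require Import zify lra.
Set Implicit Arguments. Unset Strict Implicit. Unset Printing Implicit Defensive.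
Import Order.TTheory GRing.Theory Num.Theory.
Local Open Scope ring_scope.

(* Let S p be the partial sum of the first p terms. If some p >= n has
   S p <= S i + 1 for the n indices i in [p - n, p), then [p - n + 1, p] is the
   required interval. Otherwise S gains more than 1 within every window of n
   consecutive indices, so S (2^n) > 2^n / n - n > 1 once 2^n >= n (n + 1),
   i.e. once n >= 7, contradicting the hypothesis on the total sum. *)

Lemma leq_mulSn_exp2 (n : nat) : (7 <= n)%N -> (n * n.+1 <= 2 ^ n)%N.
Proof.
move=> le7n; rewrite -(subnK le7n).
by elim: (n - 7)%N => [|k IHk] //; rewrite addSn expnS; nia.
Qed.

Lemma big_nat_suffix (V : zmodType) (m k n : nat) (F : nat -> V) :
  (m <= k <= n)%N ->
  \sum_(k <= j < n) F j = \sum_(m <= j < n) F j - \sum_(m <= j < k) F j.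
Proof.
by case/andP=> lemk lekn; rewrite (big_cat_nat lemk lekn) /= addrAC subrr add0r.
Qed.

Lemma sum_nat_ge_opp (R : numDomainType) (p : nat) (F : nat -> R) :
  (forall j, (1 <= j <= p)%N -> -1 <= F j) ->
  - p%:R <= \sum_(1 <= j < p.+1) F j.
Proof.
move=> F_ge; have := ler_sum_nat (m := 1) (n := p.+1) (F := fun=> -1) F_ge.
by rewrite sumr_const_nat subn1 mulNrn.
Qed.

Lemma windowed_growth (R : realDomainType) (f : nat -> R) (c : R) (n N : nat) :
  (forall p, (p < n)%N -> c < f p) ->
  (forall p, (n <= p <= N)%N -> exists2 i, (p - n <= i < p)%N & f i + 1 < f p) ->
  forall p, (p <= N)%N -> c + (p %/ n)%:R < f p.
Proof.
move=> f_base f_step; elim/ltn_ind=> p IHp lepN.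
have [ltpn | lenp] := ltnP p n; first by rewrite divn_small // addr0 f_base.
have [i /andP [lei ltip] f_gain] := f_step p (introT andP (conj lenp lepN)).
have le_div : (p %/ n <= (i %/ n).+1)%N.
  apply: (@leq_trans ((i + n) %/ n)); first by apply: leq_div2r; lia.
  by rewrite divnDr // divnn; case: (0 < n)%N; lia.
have := IHp i ltip (ltnW (leq_trans ltip lepN)).
move: le_div; rewrite -(ler_nat R) -natr1; lra.
Qed.

Theorem mainTheorem5 (R : realFieldType) (n : nat) (delta : nat -> R) :
  (7 <= n)%N ->
  (forall j, (1 <= j <= 2 ^ n)%N -> -1 <= delta j <= 1) ->
  \sum_(1 <= j < (2 ^ n).+1) delta j <= 1 ->
  exists m p : nat,
    [/\ (1 <= m)%N, (m <= p)%N, (p <= 2 ^ n)%N, (n <= p - m + 1)%N &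
        forall k : nat, (m <= k <= p)%N -> \sum_(k <= j < p.+1) delta j <= 1].
Proof.
move=> le7n delta_bound sum_le1; set N := (2 ^ n)%N.
pose S p := \sum_(1 <= j < p.+1) delta j.
pose window_ok p := all (fun i => S p <= S i + 1) (index_iota (p - n) p).
have [/hasP [p] | /hasPn no_window] := boolP (has window_ok (index_iota n N.+1)).
  rewrite mem_index_iota => /andP [lenp ltpN] /allP okp.
  exists (p.+1 - n)%N, p; split; try lia.
  move=> k /andP [lemk lekp]; have lt0k : (0 < k)%N by lia.
  rewrite (big_nat_suffix (m := 1)) ?lt0k ?leqW // -(prednK lt0k).
  have : (p - n <= k.-1 < p)%N by lia.
  by rewrite -mem_index_iota => /okp; rewrite /S; lra.
have ltnN : (n < N)%N by rewrite ltn_expl.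
have S_base p : (p < n)%N -> - n%:R < S p.
  move=> ltpn; apply: (@lt_le_trans _ _ (- p%:R)); first by rewrite ltrN2 ltr_nat.
  apply: sum_nat_ge_opp => j /andP [le1j lejp].
  have lejN : (j <= N)%N by rewrite (leq_trans lejp) // ltnW // (ltn_trans ltpn).
  by case/andP: (delta_bound j (introT andP (conj le1j lejN))).
have S_step p : (n <= p <= N)%N -> exists2 i, (p - n <= i < p)%N & S i + 1 < S p.
  move=> /andP [lenp lepN].
  have /allPn [i] : ~~ window_ok p by apply: no_window; rewrite mem_index_iota lenp ltnS.
  by rewrite mem_index_iota -ltNge; exists i.
have := windowed_growth S_base S_step (leqnn N).
have : (n.+1 <= N %/ n)%N.
  by rewrite leq_divRL ?(ltn_trans _ le7n) // mulnC leq_mulSn_exp2.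
by rewrite -(ler_nat R) -natr1 /S; lra.
Qed.
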